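(* Let $\Lambda$ be an operator that satisfies balanced treatment and non-arbitrariness. Then $\Lambda$ satisfies present boundedness.
   Context: Agents are elements of $\mathbb{N}$; $N$ denotes a nonempty finite subset of $\mathbb{N}$. A (standard) claims problem is a triple $(N,c,E)$ with $c\in\mathbb{R}_+^N$, $E\in\mathbb{R}_+$, $C=\sum_{i\in N}c_i>0$ and $E\le C$. An allocation for it is $x\in\mathbb{R}^N$ with $0\le x_i\le c_i$ for all $i$ and $\sum_ix_i=E$. A standard rule $R$ assigns to each standard claims problem an allocation $R(N,c,E)$; $\mathcal{R}$ is the set of standard rules. A history for $N$ is a finite sequence $h=\{(c^{(t)},x^{(t)})\}_{t=1}^{|T|}$ where for each $t$, $c^{(t)}\in\mathbb{R}_+^N$ and $x^{(t)}$ is an allocation of $(N,c^{(t)},\sum_ix^{(t)}_i)$. A historical claims problem is $(N,c,E,h)$ with $(N,c,E)$ a standard claims problem and $h$ a history for $N$; its allocations are the allocations of $(N,c,E)$. A general rule assigns to each historical claims problem an allocation. An operator $\Lambda$ assigns to each standard rule $R$ a general rule $\Lambda(R)$. The history-adjusted claims are $\widetilde{c}_i=c_i+\sum_t(c^{(t)}_i-x^{(t)}_i)$. Axioms on operators (required for every $R\in\mathcal{R}$ and every historical problem $(N,c,E,h)$): Present boundedness: for each $i\in N$, if $R_i(N,\widetilde{c},E)\ge c_i$ then $\Lambda_i(R)(N,c,E,h)=c_i$. Balanced treatment: for each $i,j\in N$ with $\Lambda_i(R)(N,c,E,h)<c_i$ and $\Lambda_j(R)(N,c,E,h)<c_j$,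 $\Lambda_i(R)(N,c,E,h)-R_i(N,\widetilde{c},E)=\Lambda_j(R)(N,c,E,h)-R_j(N,\widetilde{c},E)$. Non-arbitrariness: for each $i\in N$ with $\Lambda_i(R)(N,c,E,h)=c_i$ and $R_i(N,\widetilde{c},E)<c_i$, we have $\Lambda_i(R)(N,c,E,h)-R_i(N,\widetilde{c},E)\le\Lambda_j(R)(N,c,E,h)-R_j(N,\widetilde{c},E)$ for all $j\in N$ with $\Lambda_j(R)(N,c,E,h)<c_j$. *)

From HB Require Import structures.
From mathcomp Require Import all_boot all_order all_algebra.
From mathcomp Require Import finmap.
From mathcomp Require Import Rstruct.
From Stdlib Require Import Rdefinitions.

Set Implicit Arguments.
Unset Strict Implicit.
Unset Printing Implicit Defensive.

Import Order.TTheory GRing.Theory Num.Theory.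
Local Open Scope ring_scope.


Definition vec (N : {fset nat}) := {ffun N -> R}.

Definition is_standard (N : {fset nat}) (c : vec N) (E : R) : Prop :=
  N != fset0%fset /\ (forall i : N, 0 <= c i) /\ 0 <= E /\
  0 < \sum_(i : N) c i /\ E <= \sum_(i : N) c i.

Definition is_allocation (N : {fset nat}) (c : vec N) (E : R) (x : vec N) : Prop :=
  (forall i : N, 0 <= x i /\ x i <= c i) /\ \sum_(i : N) x i = E.

(* Standard rules: assign an allocation to each standard claims problem
   (values on non-standard inputs are irrelevant). *)
Definition std_rule :=
  { Rf : forall N : {fset nat}, vec N -> R -> vec N |
    forall N c E, is_standard c E -> is_allocation c E (Rf N c E) }.

Definition app_std (Rr : std_rule) : forall N : {fset nat}, vec N -> R -> vec N :=
  proj1_sig Rr.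
Arguments app_std Rr N c E : clear implicits.

(* Histories: finite sequences of pairs (c^(t), x^(t)). *)
Definition history (N : {fset nat}) := seq (vec N * vec N).

Definition is_history (N : {fset nat}) (h : history N) : Prop :=
  forall t, t \in h ->
    (forall i : N, 0 <= t.1 i) /\
    is_allocation t.1 (\sum_(i : N) t.2 i) t.2.

Definition gen_rule :=
  { G : forall N : {fset nat}, vec N -> R -> history N -> vec N |
    forall N c E h, is_standard c E -> is_history h ->
      is_allocation c E (G N c E h) }.

Definition app_gen (G : gen_rule) :
  forall N : {fset nat}, vec N -> R -> history N -> vec N := proj1_sig G.
Arguments app_gen G N c E h : clear implicits.

Definition operator := std_rule -> gen_rule.

Definition adj_claims (N : {fset nat}) (c : vec N) (h : history N) : vec N :=
  [ffun i => c i + \sum_(t <- h) (t.1 i - t.2 i)].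

Definition present_boundedness (L : operator) : Prop :=
  forall (Rr : std_rule) (N : {fset nat}) (c : vec N) (E : R) (h : history N),
    is_standard c E -> is_history h ->
    forall i : N,
      c i <= app_std Rr N (adj_claims c h) E i ->
      app_gen (L Rr) N c E h i = c i.

Definition balanced_treatment (L : operator) : Prop :=
  forall (Rr : std_rule) (N : {fset nat}) (c : vec N) (E : R) (h : history N),
    is_standard c E -> is_history h ->
    forall i j : N,
      app_gen (L Rr) N c E h i < c i ->
      app_gen (L Rr) N c E h j < c j ->
      app_gen (L Rr) N c E h i - app_std Rr N (adj_claims c h) E i =
      app_gen (L Rr) N c E h j - app_std Rr N (adj_claims c h) E j.

Definition non_arbitrariness (L : operator) : Prop :=
  forall (Rr : std_rule) (N : {fset nat}) (c : vec N) (E : R) (h : history N),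
    is_standard c E -> is_history h ->
    forall i : N,
      app_gen (L Rr) N c E h i = c i ->
      app_std Rr N (adj_claims c h) E i < c i ->
      forall j : N, app_gen (L Rr) N c E h j < c j ->
        app_gen (L Rr) N c E h i - app_std Rr N (adj_claims c h) E i <=
        app_gen (L Rr) N c E h j - app_std Rr N (adj_claims c h) E j.

(* Let x be the award of the general rule and r the award of the standard
   rule on the history-adjusted claims.  If some agent i had x_i < c_i <= r_i,
   then every gap x_j - r_j would be nonpositive: balanced treatment equates it
   with x_i - r_i for the agents below their claims, and non-arbitrariness
   bounds it by x_i - r_i for the fully awarded agents with r_j < c_j.  Since x
   and r both distribute the same estate E, all gaps vanish, contradicting
   x_i < r_i. *)

From HB Require Import structures.
From mathcomp Require Import all_boot all_order all_algebra.
From mathcomp Require Import finmap.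
From mathcomp Require Import Rstruct.
From Stdlib Require Import Rdefinitions.
Set Implicit Arguments.
Unset Strict Implicit.
Unset Printing Implicit Defensive.

Import Order.TTheory GRing.Theory Num.Theory.
Local Open Scope ring_scope.

Lemma eq_of_ler_sum_eq (R : numDomainType) (I : finType) (F G : I -> R) :
  (forall i, F i <= G i) -> \sum_i F i = \sum_i G i -> forall i, F i = G i.
Proof.
move=> leFG eq_sum i.
have [_] := leif_sum (fun j (_ : true) => leif_eq (leFG j)).
by rewrite eq_sum eqxx => /esym/forall_inP/(_ i isT)/eqP.
Qed.

Lemma adj_claims_ge (N : {fset nat}) (c : vec N) (h : history N) :
  is_history h -> forall i : N, c i <= adj_claims c h i.
Proof.
move=> hist i; rewrite ffunE lerDl big_seq.
apply: sumr_ge0 => t /hist [_ [/(_ i) [_ le_xc] _]].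
by rewrite subr_ge0.
Qed.

Lemma is_standard_adj_claims (N : {fset nat}) (c : vec N) (E : R) (h : history N) :
  is_standard c E -> is_history h -> is_standard (adj_claims c h) E.
Proof.
move=> [N0 [c_ge0 [E_ge0 [sum_gt0 le_E]]]] hist.
have le_sum : \sum_(i : N) c i <= \sum_(i : N) adj_claims c h i.
  by apply: ler_sum => i _; apply: adj_claims_ge.
split=> //; split; first by move=> i; exact: le_trans (c_ge0 i) (adj_claims_ge c hist i).
by split=> //; split; [exact: lt_le_trans sum_gt0 le_sum | exact: le_trans le_E le_sum].
Qed.

Lemma app_gen_allocation (G : gen_rule) (N : {fset nat}) (c : vec N) (E : R)
    (h : history N) :
  is_standard c E -> is_history h -> is_allocation c E (app_gen G N c E h).
Proof. exact: (proj2_sig G). Qed.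

Lemma app_std_allocation (Rr : std_rule) (N : {fset nat}) (c : vec N) (E : R) :
  is_standard c E -> is_allocation c E (app_std Rr N c E).
Proof. exact: (proj2_sig Rr). Qed.

Section OneProblem.

Variables (L : operator) (Rr : std_rule).
Variables (N : {fset nat}) (c : vec N) (E : R) (h : history N).
Hypotheses (std : is_standard c E) (hist : is_history h).

Let x := app_gen (L Rr) N c E h.
Let r := app_std Rr N (adj_claims c h) E.

Lemma awards_le_std_of_unsatisfied :
  balanced_treatment L -> non_arbitrariness L ->
  forall i : N, x i < c i -> x i <= r i -> forall j : N, x j <= r j.
Proof.
rewrite /x /r => BT NA i xi_lt xi_le j.
rewrite -subr_le0 in xi_le; rewrite -subr_le0.
have [_ xj_le] := (app_gen_allocation (L Rr) std hist).1 j.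
have [xj_eq | xj_neq] := eqVneq (x j) (c j); last first.
  by rewrite (BT Rr N c E h std hist j i) // lt_neqAle xj_neq.
have [cj_le | rj_lt] := leP (c j) (r j); first by rewrite subr_le0 xj_eq.
exact: le_trans (NA Rr N c E h std hist j xj_eq rj_lt i xi_lt) xi_le.
Qed.

End OneProblem.

Theorem lemma1 (L : operator) :
  balanced_treatment L -> non_arbitrariness L -> present_boundedness L.
Proof.
move=> BT NA Rr N c E h std hist i ci_le.
set x := app_gen (L Rr) N c E h; set r := app_std Rr N (adj_claims c h) E.
have [x_bnd x_sum] := app_gen_allocation (L Rr) std hist.
have [_ r_sum] := app_std_allocation Rr (is_standard_adj_claims std hist).
have [-> // | xi_neq] := eqVneq (x i) (c i).
have xi_lt : x i < c i by rewrite lt_neqAle xi_neq (x_bnd i).2.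
have all_le := awards_le_std_of_unsatisfied std hist BT NA xi_lt
  (ltW (lt_le_trans xi_lt ci_le)).
have sum_eq : \sum_(j : N) x j = \sum_(j : N) r j by rewrite x_sum r_sum.
have xi_eq := eq_of_ler_sum_eq all_le sum_eq i.
by move: (lt_le_trans xi_lt ci_le); rewrite xi_eq ltxx.
Qed.
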